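(* In the monoid $\Pi_2=\langle a,b,c\mid (ab^ic)^2=1\ (i\geq 1)\rangle$, for every $i\geq 1$ the factorisation of the word $(ab^ic)^2$ into minimal invertible factors is $(ab^ic)(ab^ic)$; that is, $ab^ic$ is a minimal invertible word in $\Pi_2$.
   Context: A word $w$ over $\{a,b,c\}$ is invertible in a monoid $M$ if the element it represents is a unit (has both a left and a right inverse). A non-empty invertible word is minimal (a minimal invertible factor) if none of its non-empty proper prefixes is invertible in $M$ (equivalently, none of its non-empty proper suffixes is invertible). Every invertible word factors uniquely as a product of minimal invertible words. *)

From Stdlib Require Import List.
From mathcomp Require Import all_boot.
Set Implicit Arguments. Unset Strict Implicit. Unset Printing Implicit Defensive.

Inductive letter := La | Lb | Lc.

Definition word := seq letter.

Definition abc (i : nat) : word := [:: La] ++ nseq i Lb ++ [:: Lc].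

Definition Pi2_rel (l r : word) : Prop :=
  exists i, 1 <= i /\ l = abc i ++ abc i /\ r = [::].

Definition Pi2_step (u v : word) : Prop :=
  exists x y l r, Pi2_rel l r /\
    ((u = x ++ l ++ y /\ v = x ++ r ++ y) \/ (u = x ++ r ++ y /\ v = x ++ l ++ y)).

(* The monoid congruence generated by the relations: the reflexive-transitive
   closure of the (symmetric) one-step relation. Two words are equal in Pi_2
   iff they are related by Pi2_eq. *)
Inductive Pi2_eq : word -> word -> Prop :=
  | Pi2_refl u : Pi2_eq u u
  | Pi2_trans u v w : Pi2_step u v -> Pi2_eq v w -> Pi2_eq u w.

Definition invertible (w : word) : Prop :=
  (exists l : word, Pi2_eq (l ++ w) [::]) /\ (exists r : word, Pi2_eq (w ++ r) [::]).

Definition minimal_invertible (w : word) : Prop :=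
  w <> [::] /\ invertible w /\
  forall n, 0 < n -> n < size w -> ~ invertible (take n w).

Definition min_inv_factorisation (w : word) (fs : seq word) : Prop :=
  flatten fs = w /\ List.Forall minimal_invertible fs.

(* Invertibility of a b^i c is immediate from the defining relation.  For
   minimality, the proper non-empty prefixes of a b^i c are the words a b^k,
   and these are not even left invertible: let the monoid act on nat by
   a : n |-> n+1, b : n |-> n, c : n |-> n-1 (truncated).  Every relator
   a b^j c acts trivially, so the action is an invariant of Pi2_eq, while
   l a b^k sends 0 to a positive number, unlike the empty word.
   The factorisation part is a general fact about minimal invertible words:
   a minimal invertible prefix of a word is determined by the word (of two
   such prefixes, the shorter would be an invertible proper prefix of the
   longer), so factorisations of g ++ t with g minimal invertible are exactly
   g followed by a factorisation of t; the empty word has only the empty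
   factorisation. *)
From Stdlib Require Import List.
From mathcomp Require Import all_boot zify.

Definition letter_act (x : letter) (n : nat) : nat :=
  match x with La => n.+1 | Lb => n | Lc => n.-1 end.

Definition word_act (w : word) (n : nat) : nat := foldl (fun m x => letter_act x m) n w.

Lemma word_act_cat (u v : word) (n : nat) : word_act (u ++ v) n = word_act v (word_act u n).
Proof. by rewrite /word_act foldl_cat. Qed.

Lemma word_act_nseqb (k n : nat) : word_act (nseq k Lb) n = n.
Proof. by elim: k. Qed.

Lemma word_act_abc (j n : nat) : word_act (abc j) n = n.
Proof. by rewrite /abc word_act_cat /= word_act_cat word_act_nseqb. Qed.

Lemma word_act_Pi2_eq {u v : word} : Pi2_eq u v -> forall n, word_act u n = word_act v n.
Proof.
elim=> [//|{}u {}v w [x [y [l [r [[j [_ [-> ->]]] step]]]]] _ IH] n; rewrite -IH.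
have act_mid m : word_act (x ++ m ++ y) n = word_act y (word_act m (word_act x n)).
  by rewrite !word_act_cat.
by case: step => -[-> ->]; rewrite !act_mid word_act_cat !word_act_abc.
Qed.

Lemma not_invertible_abk (k : nat) : ~ invertible (La :: nseq k Lb).
Proof.
move=> [[l inv_l] _]; have := word_act_Pi2_eq inv_l 0.
by rewrite word_act_cat /= word_act_nseqb.
Qed.

Lemma invertible_abc {j : nat} : 1 <= j -> invertible (abc j).
Proof.
move=> hj; have inv : Pi2_eq (abc j ++ abc j) [::].
  apply: (@Pi2_trans _ [::]); last exact: Pi2_refl.
  exists [::], [::], (abc j ++ abc j), [::]; split; first by exists j.
  by left; rewrite /= !cats0.
by split; exists (abc j).
Qed.

Lemma size_abc (j : nat) : size (abc j) = j.+2.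
Proof. by rewrite /abc /= size_cat size_nseq addn1. Qed.

Lemma take_abc (j m : nat) : 0 < m -> m < j.+2 -> take m (abc j) = La :: nseq m.-1 Lb.
Proof.
case: m => // m _ hm; rewrite /abc /= take_cat size_nseq.
case: ltnP => h; first by rewrite take_nseq // ltnW.
have -> : m = j by lia.
by rewrite subnn take0 cats0.
Qed.

Lemma minimal_invertible_abc {j : nat} : 1 <= j -> minimal_invertible (abc j).
Proof.
move=> hj; split=> //; split; first exact: invertible_abc.
by move=> n n_gt0; rewrite size_abc => n_lt; rewrite take_abc //; apply: not_invertible_abk.
Qed.

Lemma minimal_invertible_prefix_size {f g s t : word} :
  minimal_invertible f -> minimal_invertible g -> f ++ s = g ++ t -> size f <= size g.
Proof.
move=> [_ [_ f_min]] [g_ne [g_inv _]] E; rewrite leqNgt; apply/negP => g_lt.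
have g_gt0 : 0 < size g by case: g g_ne {g_inv E g_lt}.
apply: (f_min (size g)) => //.
have : take (size g) (f ++ s) = take (size g) (g ++ t) by rewrite E.
by rewrite take_cat g_lt take_size_cat // => ->.
Qed.

Lemma minimal_invertible_prefix_unique {f g s t : word} :
  minimal_invertible f -> minimal_invertible g -> f ++ s = g ++ t -> f = g /\ s = t.
Proof.
move=> f_min g_min E.
have size_fg : size f = size g.
  by apply/eqP; rewrite eqn_leq (minimal_invertible_prefix_size f_min g_min E)
    (minimal_invertible_prefix_size g_min f_min (esym E)).
have f_eq_g : f = g.
  by rewrite -(take_size_cat s (erefl (size f))) E size_fg take_size_cat.
split=> //; have := congr1 (drop (size f)) E.
by rewrite drop_size_cat // f_eq_g drop_size_cat.
Qed.

Lemma min_inv_factorisation_nil (fs : seq word) :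
  min_inv_factorisation [::] fs <-> fs = [::].
Proof.
split=> [[flat_fs all_min]|->]; last by split=> //; constructor.
case: fs flat_fs all_min => [//|f fs] /= flat_fs /Forall_cons_iff [[f_ne _] _].
by case: f f_ne flat_fs.
Qed.

Lemma min_inv_factorisation_cons (g t : word) (fs : seq word) :
  minimal_invertible g ->
  min_inv_factorisation (g ++ t) fs <->
  exists2 fs', fs = g :: fs' & min_inv_factorisation t fs'.
Proof.
move=> g_min; split=> [[flat_fs all_min]|[fs' -> [flat_fs' all_min']]].
- case: fs flat_fs all_min => [|f fs] /= flat_fs.
    by case: g g_min flat_fs => [[]|].
  move=> /Forall_cons_iff [f_min all_min].
  have [-> flat_eq] := minimal_invertible_prefix_unique f_min g_min flat_fs.
  by exists fs.
- by split; [rewrite /= flat_fs' | apply/Forall_cons_iff].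
Qed.

Theorem mainTheorem4 (i : nat) (hi : 1 <= i) :
  minimal_invertible (abc i) /\
  (forall fs : seq word,
     min_inv_factorisation (abc i ++ abc i) fs <-> fs = [:: abc i; abc i]).
Proof.
have abc_min := minimal_invertible_abc hi.
have single fs : min_inv_factorisation (abc i) fs <-> fs = [:: abc i].
  rewrite -{1}[abc i]cats0 min_inv_factorisation_cons //.
  split=> [[fs' -> /min_inv_factorisation_nil ->]|->] //.
  by exists [::]; last apply/min_inv_factorisation_nil.
split=> // fs; rewrite min_inv_factorisation_cons //.
split=> [[fs' -> /single ->]|->] //.
by exists [:: abc i]; last apply/single.
Qed.
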